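(* Let $\gamma$ and $c$ be real constants and let $u(\xi)$, $v(\xi)$ be smooth functions of $\xi\in\mathbb{R}$ satisfying the travelling-wave system \[ -c u' + 3 u u' = - v\,\big(\gamma v'' + 3v^2\big)', \qquad -c v' + (uv)' = -\big(\gamma v'' + 3 v^2\big)', \] with boundary conditions $\lim_{\xi\to\pm\infty} u(\xi) = u_0$ and $\lim_{\xi\to\pm\infty} v(\xi) = 0$. Then for all $\xi$, \[ (u-c)^2\left(u - \tfrac12 v^2\right) = (u_0 - c)^2 u_0 . \]
   Context: This system is obtained from the Burgers–swept KdV system $u_t + 3uu_x = -v\partial_x(3v^2+\gamma v_{xx})$, $v_t + 6vv_x + \gamma v_{xxx} = -\partial_x(uv)$ by the travelling-wave ansatz $u(x,t)=u(\xi)$, $v(x,t)=v(\xi)$ with $\xi = x-ct$; primes denote $d/d\xi$. *)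

From Stdlib Require Import Reals.
From Coquelicot Require Import Coquelicot.
Open Scope R_scope.

Definition smooth (f : R -> R) : Prop := forall (n : nat) (x : R), ex_derive_n f n x.

(** Eliminating the common flux derivative [(gamma v'' + 3 v^2)'] between the
    two equations leaves the first-order relation
    [(3u - c - v^2) u' = (u - c) v v'], and
    [((u - c)^2 (u - v^2/2))' = (u - c) ((3u - c - v^2) u' - (u - c) v v')].
    Hence [(u - c)^2 (u - v^2/2)] is constant, and its value is read off at
    [+oo] from the boundary conditions. *)

From Stdlib Require Import Reals Lra.
From Coquelicot Require Import Coquelicot.
Open Scope R_scope.

Lemma is_derive_zero_eq (f : R -> R) :
  (forall t, is_derive f t 0) -> forall a b, f a = f b.
Proof.
  intros df.
  assert (df' : forall a b, a < b -> f a = f b).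
  { intros a b ab. apply (eq_is_derive f a b); auto. }
  intros a b. destruct (Rtotal_order a b) as [ab | [-> | ba]].
  - now apply df'.
  - reflexivity.
  - symmetry. now apply df'.
Qed.

Lemma is_derive_zero_eq_lim (f : R -> R) (x : Rbar) (l : R) :
  (forall t, is_derive f t 0) -> is_lim f x l -> forall y, f y = l.
Proof.
  intros df lf y.
  assert (lf' : is_lim f x (f y)).
  { apply is_lim_ext with (fun _ => f y).
    - intro z. apply is_derive_zero_eq, df.
    - apply is_lim_const. }
  apply is_lim_unique in lf, lf'.
  rewrite lf in lf'. now injection lf'.
Qed.

Definition wave_invariant (c : R) (u v : R -> R) (y : R) : R :=
  (u y - c) ^ 2 * (u y - / 2 * v y ^ 2).

Lemma is_derive_wave_invariant (c : R) (u v : R -> R) (t du dv : R) :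
  is_derive u t du -> is_derive v t dv ->
  is_derive (wave_invariant c u v) t
    ((u t - c) * ((3 * u t - c - v t ^ 2) * du - (u t - c) * v t * dv)).
Proof.
  intros Du Dv. unfold wave_invariant.
  auto_derive.
  - now split; [exists du | split; [exists du | split; [exists dv |]]].
  - change (Derive (fun x => u x) t) with (Derive u t).
    change (Derive (fun x => v x) t) with (Derive v t).
    rewrite (is_derive_unique u t du Du), (is_derive_unique v t dv Dv).
    field.
Qed.

Lemma is_lim_sqr (f : R -> R) (x : Rbar) (l : R) :
  is_lim f x l -> is_lim (fun y => f y ^ 2) x (l ^ 2).
Proof.
  intro lf. apply (is_lim_comp_continuous f (fun z => z ^ 2)); [exact lf |].
  apply (ex_derive_continuous (V := R_NormedModule)). auto_derive. exact I.
Qed.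

Lemma is_lim_wave_invariant (c u0 : R) (u v : R -> R) (x : Rbar) :
  is_lim u x u0 -> is_lim v x 0 ->
  is_lim (wave_invariant c u v) x ((u0 - c) ^ 2 * u0).
Proof.
  intros lu lv.
  replace ((u0 - c) ^ 2 * u0) with ((u0 - c) ^ 2 * (u0 - / 2 * 0 ^ 2)) by ring.
  apply (is_lim_mult _ _ _ (Finite ((u0 - c) ^ 2)) (Finite (u0 - / 2 * 0 ^ 2)));
    [| | exact I].
  - apply is_lim_sqr, (is_lim_minus _ _ _ u0 c);
      [exact lu | apply is_lim_const | reflexivity].
  - apply (is_lim_minus _ _ _ u0 (/ 2 * 0 ^ 2)); [exact lu | | reflexivity].
    apply (is_lim_scal_l _ (/ 2) x (0 ^ 2)), is_lim_sqr, lv.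
Qed.

Theorem lemma2p1 (gamma c u0 : R) (u v : R -> R) :
  smooth u -> smooth v ->
  (forall xi : R,
     - c * Derive u xi + 3 * u xi * Derive u xi
     = - v xi * Derive (fun y => gamma * Derive_n v 2 y + 3 * v y ^ 2) xi) ->
  (forall xi : R,
     - c * Derive v xi + Derive (fun y => u y * v y) xi
     = - Derive (fun y => gamma * Derive_n v 2 y + 3 * v y ^ 2) xi) ->
  is_lim u p_infty u0 -> is_lim u m_infty u0 ->
  is_lim v p_infty 0 -> is_lim v m_infty 0 ->
  forall xi : R,
    (u xi - c) ^ 2 * (u xi - / 2 * v xi ^ 2) = (u0 - c) ^ 2 * u0.
Proof.
  intros su sv E1 E2 lu _ lv _.
  apply (is_derive_zero_eq_lim (wave_invariant c u v) p_infty).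
  - intro t.
    assert (du : ex_derive u t) by exact (su 1%nat t).
    assert (dv : ex_derive v t) by exact (sv 1%nat t).
    assert (reduced : (3 * u t - c - v t ^ 2) * Derive u t
                      - (u t - c) * v t * Derive v t = 0).
    { specialize (E1 t). specialize (E2 t).
      rewrite Derive_mult in E2 by assumption.
      set (flux := fun y => gamma * Derive_n v 2 y + 3 * v y ^ 2) in E1, E2.
      assert (flux' : Derive flux t = c * Derive v t
                        - (Derive u t * v t + u t * Derive v t)) by lra.
      rewrite flux' in E1. lra. }
    replace 0 with ((u t - c) * ((3 * u t - c - v t ^ 2) * Derive u t
                      - (u t - c) * v t * Derive v t)) by (rewrite reduced; ring).
    apply is_derive_wave_invariant; now apply Derive_correct.
  - now apply is_lim_wave_invariant.
Qed.
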